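(* Let $A$ be a densely defined closed operator in a complex Hilbert space with $\operatorname{D}(A)\subset\operatorname{D}(A^* )$ and $\operatorname{Num}(A)\subset\{z:\operatorname{Im}z\ge0\}$. Assume that for every sequence $a_n>0$ with $a_n\to0$ one has $K(a_n)\to\infty$, where $$K(a)=\inf\Big\{\tfrac{\operatorname{Im}\langle Av,v\rangle}{(\operatorname{Re}\langle Av,v\rangle)^2}: v\in\operatorname{D}(A),\|v\|=1,\ 0<|\langle Av,v\rangle|<a,\ \operatorname{Re}\langle Av,v\rangle>0\Big\}.$$ Let $\alpha\in\mathbb{C}$ with $0<\operatorname{Re}\alpha<1$, $0<\operatorname{Im}\alpha<1$, $|\alpha|<1$, let $(\varepsilon_n)\subset(0,1)$ with $\varepsilon_n\to0$, and let $(u_n)\subset\operatorname{D}(A)$ with $\|u_n\|=1$ and $\langle Au_n,u_n\rangle=\varepsilon_n\alpha$. Let $(v_n)\subset\operatorname{D}(A)$ satisfy $\max(\sup_n\|v_n\|,\sup_n\|Av_n\|,\sup_n\|A^*v_n\|)\le1$ and $\sup_n|\operatorname{Re}\langle Av_n,v_n\rangle|\le\operatorname{Re}(\alpha)/2$. Then $$\operatorname{Re}(\langle Av_n,u_n\rangle+\langle Au_n,v_n\rangle)\to0\quad(n\to\infty).$$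
   Context: $\operatorname{Num}(A)=\{\langle Af,f\rangle: f\in\operatorname{D}(A),\|f\|=1\}$. The infimum of the empty set is $+\infty$. *)

From Stdlib Require Import Reals.
Open Scope R_scope.

Record Cplx := mkC { Re : R; Im : R }.

Definition Cadd (z w : Cplx) : Cplx := mkC (Re z + Re w) (Im z + Im w).
Definition Cmul (z w : Cplx) : Cplx :=
  mkC (Re z * Re w - Im z * Im w) (Re z * Im w + Im z * Re w).
Definition Cconj (z : Cplx) : Cplx := mkC (Re z) (- Im z).
Definition Cabs (z : Cplx) : R := sqrt (Re z ^ 2 + Im z ^ 2).
Definition RtoC (r : R) : Cplx := mkC r 0.
Definition C1 : Cplx := mkC 1 0.

(* ---------- complex Hilbert spaces ----------
   Inner product linear in the FIRST argument, conjugate-linear in the second. *)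
Record Hilbert := {
  Hcar :> Type;
  hzero : Hcar;
  hadd : Hcar -> Hcar -> Hcar;
  hopp : Hcar -> Hcar;
  hscal : Cplx -> Hcar -> Hcar;
  hinner : Hcar -> Hcar -> Cplx;
  hadd_assoc : forall x y z, hadd x (hadd y z) = hadd (hadd x y) z;
  hadd_comm : forall x y, hadd x y = hadd y x;
  hadd_0 : forall x, hadd x hzero = x;
  hadd_opp : forall x, hadd x (hopp x) = hzero;
  hscal_1 : forall x, hscal C1 x = x;
  hscal_assoc : forall a b x, hscal a (hscal b x) = hscal (Cmul a b) x;
  hscal_distr_v : forall a x y, hscal a (hadd x y) = hadd (hscal a x) (hscal a y);
  hscal_distr_s : forall a b x, hscal (Cadd a b) x = hadd (hscal a x) (hscal b x);
  hinner_add_l : forall x y z, hinner (hadd x y) z = Cadd (hinner x z) (hinner y z);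
  hinner_scal_l : forall a x y, hinner (hscal a x) y = Cmul a (hinner x y);
  hinner_conj : forall x y, hinner y x = Cconj (hinner x y);
  hinner_pos : forall x, 0 <= Re (hinner x x);
  hinner_def : forall x, Re (hinner x x) = 0 -> x = hzero;
  hcomplete : forall s : nat -> Hcar,
    (forall eps, 0 < eps -> exists N, forall m n, (N <= m)%nat -> (N <= n)%nat ->
        sqrt (Re (hinner (hadd (s m) (hopp (s n))) (hadd (s m) (hopp (s n))))) < eps) ->
    exists l, forall eps, 0 < eps -> exists N, forall n, (N <= n)%nat ->
        sqrt (Re (hinner (hadd (s n) (hopp l)) (hadd (s n) (hopp l)))) < eps
}.

Arguments hzero {h}. Arguments hadd {h}. Arguments hopp {h}.
Arguments hscal {h}. Arguments hinner {h}.

Section Ops.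
Context {H : Hilbert}.

Definition hnorm (x : H) : R := sqrt (Re (hinner x x)).
Definition hsub (x y : H) : H := hadd x (hopp y).

Definition hconv (s : nat -> H) (l : H) : Prop :=
  forall eps, 0 < eps -> exists N, forall n, (N <= n)%nat -> hnorm (hsub (s n) l) < eps.

(* A (possibly unbounded) linear operator: a domain D (predicate) and a map A
   whose values outside D are irrelevant. *)
Definition is_linear_operator (D : H -> Prop) (A : H -> H) : Prop :=
  D hzero /\
  (forall x y, D x -> D y -> D (hadd x y) /\ A (hadd x y) = hadd (A x) (A y)) /\
  (forall a x, D x -> D (hscal a x) /\ A (hscal a x) = hscal a (A x)).

Definition densely_defined (D : H -> Prop) : Prop :=
  forall x eps, 0 < eps -> exists f, D f /\ hnorm (hsub x f) < eps.

Definition closed_operator (D : H -> Prop) (A : H -> H) : Prop :=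
  forall (f : nat -> H) (x y : H),
    (forall n, D (f n)) -> hconv f x -> hconv (fun n => A (f n)) y ->
    D x /\ A x = y.

(* w = A^* v  (adjoint relation); for densely defined A, w is unique *)
Definition adjoint_rel (D : H -> Prop) (A : H -> H) (v w : H) : Prop :=
  forall g, D g -> hinner (A g) v = hinner g w.

Definition adjoint_dom (D : H -> Prop) (A : H -> H) (v : H) : Prop :=
  exists w, adjoint_rel D A v w.

Definition num_range_upper (D : H -> Prop) (A : H -> H) : Prop :=
  forall f, D f -> hnorm f = 1 -> 0 <= Im (hinner (A f) f).

(* The set whose infimum is K(a) *)
Definition Kset (D : H -> Prop) (A : H -> H) (a : R) (r : R) : Prop :=
  exists v, D v /\ hnorm v = 1 /\
    0 < Cabs (hinner (A v) v) /\ Cabs (hinner (A v) v) < a /\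
    0 < Re (hinner (A v) v) /\
    r = Im (hinner (A v) v) / (Re (hinner (A v) v)) ^ 2.

(* "K(a) >= M", where K(a) = inf Kset a in [-oo,+oo] and inf of the empty
   set is +oo; this is exactly "M is a lower bound of Kset a". *)
Definition K_ge (D : H -> Prop) (A : H -> H) (a M : R) : Prop :=
  forall r, Kset D A a r -> M <= r.

Definition K_tends_infty (D : H -> Prop) (A : H -> H) (a : nat -> R) : Prop :=
  forall M, exists N, forall n, (N <= n)%nat -> K_ge D A (a n) M.

End Ops.

(* Perturb u_n by a multiple of v_n of size sqrt(eps_n): w = u_n + t v_n with
   t = ±sqrt(eps_n), the sign chosen so that t c_n = sqrt(eps_n) |c_n| where
   c_n = Re(<Av_n,u_n> + <Au_n,v_n>).  Then Re<Aw,w> >= sqrt(eps_n) |c_n| while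
   Im<Aw,w> = O(eps_n) (the cross term in the imaginary part is controlled by
   sqrt(eps_n) because Im<A.,.> >= 0 on D(A)), and ||w|| stays close to 1.
   The normalised vector therefore has numerical value of size O(sqrt(eps_n)),
   positive real part, and Im/Re^2 <= 20 / c_n^2.  Since K(a) -> +oo as a -> 0,
   this forces c_n -> 0. *)
From Stdlib Require Import Reals Lra Psatz.
Open Scope R_scope.

Lemma Rabs_le_inv (x y : R) : Rabs x <= y -> - y <= x <= y.
Proof. pose proof (Rle_abs x). pose proof (Rle_abs (- x)). rewrite Rabs_Ropp in *. lra. Qed.

Lemma Cabs_ge_Re (z : Cplx) : Rabs (Re z) <= Cabs z.
Proof.
  unfold Cabs. rewrite <- sqrt_Rsqr_abs.
  apply sqrt_le_1_alt. unfold Rsqr. nra.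
Qed.

Lemma Cabs_le_Re_Im (z : Cplx) : Cabs z <= Rabs (Re z) + Rabs (Im z).
Proof.
  unfold Cabs.
  pose proof (Rabs_pos (Re z)). pose proof (Rabs_pos (Im z)).
  rewrite <- (sqrt_square (Rabs (Re z) + Rabs (Im z))) by lra.
  apply sqrt_le_1_alt.
  pose proof (Rsqr_abs (Re z)). pose proof (Rsqr_abs (Im z)).
  unfold Rsqr in *. nra.
Qed.

Lemma Un_cv_scal_sqrt (k : R) (x : nat -> R) :
  Un_cv x 0 -> Un_cv (fun n => k * sqrt (x n)) 0.
Proof.
  intro hx.
  rewrite <- (Rmult_0_r k), <- sqrt_0.
  apply (continuity_seq (fun y => k * sqrt y)); [|exact hx].
  apply (continuity_pt_scal sqrt), continuity_pt_sqrt, Rle_refl.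
Qed.

Lemma sq_mul_normalized_ratio_le (c e x y N k : R) :
  0 < x -> 0 < N -> 0 <= k -> c ^ 2 * e <= x ^ 2 -> y * N <= k * e ->
  c ^ 2 * ((y / N) / (x / N) ^ 2) <= k.
Proof.
  intros Hx HN Hk Hce HIN.
  replace (c ^ 2 * ((y / N) / (x / N) ^ 2)) with (c ^ 2 * (y * N) / x ^ 2)
    by (field; lra).
  apply (Rmult_le_reg_r (x ^ 2)); [nra|].
  unfold Rdiv. rewrite Rmult_assoc, Rinv_l, Rmult_1_r by nra.
  pose proof (pow2_ge_0 c). nra.
Qed.

Section InnerProduct.
Context {H : Hilbert}.

Lemma Re_hinner_sym (x y : H) : Re (hinner y x) = Re (hinner x y).
Proof. rewrite (hinner_conj _ x y). reflexivity. Qed.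

Lemma Im_hinner_zero_r (x : H) : Im (hinner x hzero) = 0.
Proof.
  assert (E : Im (hinner hzero x) = Im (hinner hzero x) + Im (hinner hzero x)).
  { rewrite <- (hadd_0 _ hzero) at 1. rewrite hinner_add_l. reflexivity. }
  rewrite (hinner_conj _ hzero x). simpl. lra.
Qed.

Lemma hinner_add_r (x y z : H) :
  hinner x (hadd y z) = Cadd (hinner x y) (hinner x z).
Proof.
  rewrite (hinner_conj _ (hadd y z) x), hinner_add_l,
    (hinner_conj _ x y), (hinner_conj _ x z).
  destruct (hinner x y), (hinner x z). unfold Cconj, Cadd. simpl. f_equal; ring.
Qed.

Lemma hinner_scal_r (a : Cplx) (x y : H) :
  hinner x (hscal a y) = Cmul (Cconj a) (hinner x y).
Proof.
  rewrite (hinner_conj _ (hscal a y) x), hinner_scal_l, (hinner_conj _ x y).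
  destruct a, (hinner x y). unfold Cconj, Cmul. simpl. f_equal; ring.
Qed.

Lemma Re_hinner_comb (x1 y1 x2 y2 : H) (t : R) :
  Re (hinner (hadd x1 (hscal (RtoC t) y1)) (hadd x2 (hscal (RtoC t) y2))) =
  Re (hinner x1 x2) + t * (Re (hinner x1 y2) + Re (hinner y1 x2))
    + t * t * Re (hinner y1 y2).
Proof.
  rewrite !hinner_add_l, !hinner_add_r, !hinner_scal_l, !hinner_scal_r.
  simpl. ring.
Qed.

Lemma Im_hinner_comb (x1 y1 x2 y2 : H) (t : R) :
  Im (hinner (hadd x1 (hscal (RtoC t) y1)) (hadd x2 (hscal (RtoC t) y2))) =
  Im (hinner x1 x2) + t * (Im (hinner x1 y2) + Im (hinner y1 x2))
    + t * t * Im (hinner y1 y2).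
Proof.
  rewrite !hinner_add_l, !hinner_add_r, !hinner_scal_l, !hinner_scal_r.
  simpl. ring.
Qed.

Lemma hinner_scal_real (l : R) (x y : H) :
  Re (hinner (hscal (RtoC l) x) (hscal (RtoC l) y)) = l * l * Re (hinner x y) /\
  Im (hinner (hscal (RtoC l) x) (hscal (RtoC l) y)) = l * l * Im (hinner x y).
Proof.
  rewrite hinner_scal_l, hinner_scal_r. simpl. split; ring.
Qed.

(* Both bounds come from <x ± y, x ± y> >= 0, resp. with x replaced by i x. *)
Lemma Rabs_Re_hinner_le (x y : H) :
  Rabs (Re (hinner x y)) <= (Re (hinner x x) + Re (hinner y y)) / 2.
Proof.
  pose proof (hinner_pos _ (hadd x (hscal (RtoC 1) y))) as P.
  pose proof (hinner_pos _ (hadd x (hscal (RtoC (-1)) y))) as M.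
  rewrite Re_hinner_comb, (Re_hinner_sym x y) in P, M.
  apply Rabs_le. lra.
Qed.

Lemma Rabs_Im_hinner_le (x y : H) :
  Rabs (Im (hinner x y)) <= (Re (hinner x x) + Re (hinner y y)) / 2.
Proof.
  pose proof (Rabs_Re_hinner_le (hscal (mkC 0 1) x) y) as P.
  assert (E1 : Re (hinner (hscal (mkC 0 1) x) y) = - Im (hinner x y))
    by (rewrite hinner_scal_l; simpl; ring).
  assert (E2 : Re (hinner (hscal (mkC 0 1) x) (hscal (mkC 0 1) x)) = Re (hinner x x))
    by (rewrite hinner_scal_l, hinner_scal_r; simpl; ring).
  rewrite E1, E2, Rabs_Ropp in P. exact P.
Qed.

Lemma hnorm_sq_le1 (x : H) : hnorm x <= 1 -> Re (hinner x x) <= 1.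
Proof.
  unfold hnorm. intro E.
  pose proof (sqrt_sqrt _ (hinner_pos _ x)). pose proof (sqrt_pos (Re (hinner x x))).
  nra.
Qed.

Lemma hnorm_sq_eq1 (x : H) : hnorm x = 1 -> Re (hinner x x) = 1.
Proof.
  unfold hnorm. intro E.
  rewrite <- (sqrt_sqrt _ (hinner_pos _ x)), E. ring.
Qed.

End InnerProduct.

Section NumericalRange.
Context {H : Hilbert} (D : H -> Prop) (A : H -> H).
Hypothesis hlin : is_linear_operator D A.

Lemma A_comb (x y : H) (t : R) : D x -> D y ->
  D (hadd x (hscal (RtoC t) y)) /\
  A (hadd x (hscal (RtoC t) y)) = hadd (A x) (hscal (RtoC t) (A y)).
Proof.
  destruct hlin as [_ [hadd_lin hscal_lin]]. intros Dx Dy.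
  destruct (hscal_lin (RtoC t) y Dy) as [Dty Aty].
  destruct (hadd_lin x _ Dx Dty) as [Dw Aw].
  split; [exact Dw|]. rewrite Aw, Aty. reflexivity.
Qed.

Lemma exists_normalized (w : H) : D w -> 0 < Re (hinner w w) ->
  exists g, D g /\ hnorm g = 1 /\
    Re (hinner w w) * Re (hinner (A g) g) = Re (hinner (A w) w) /\
    Re (hinner w w) * Im (hinner (A g) g) = Im (hinner (A w) w).
Proof.
  intros Dw Nw. destruct hlin as [_ [_ hscal_lin]].
  set (N := Re (hinner w w)) in *.
  set (l := / sqrt N).
  assert (Hl : l * l * N = 1).
  { unfold l. rewrite <- (sqrt_sqrt N) at 3 by lra.
    pose proof (sqrt_lt_R0 N Nw). field. lra. }
  destruct (hscal_lin (RtoC l) w Dw) as [Dg Ag].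
  exists (hscal (RtoC l) w).
  destruct (hinner_scal_real l w w) as [ReN _].
  destruct (hinner_scal_real l (A w) w) as [ReA ImA].
  rewrite Ag, ReA, ImA.
  split; [exact Dg|]. split.
  - unfold hnorm. rewrite ReN. fold N. rewrite Hl. apply sqrt_1.
  - split; rewrite <- Rmult_assoc, (Rmult_comm N), Hl; ring.
Qed.

Hypothesis hnum : num_range_upper D A.

Lemma Im_hinner_A_ge0 (f : H) : D f -> 0 <= Im (hinner (A f) f).
Proof.
  intro Df.
  destruct (Req_dec (Re (hinner f f)) 0) as [N0 | N0].
  - apply hinner_def in N0. subst f. rewrite Im_hinner_zero_r. lra.
  - assert (Npos : 0 < Re (hinner f f)) by (pose proof (hinner_pos _ f); lra).
    destruct (exists_normalized f Df Npos) as [g [Dg [Ng [_ Eim]]]].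
    rewrite <- Eim. pose proof (hnum g Dg Ng). nra.
Qed.

(* Minimise the imaginary part of <A(u + tau v), u + tau v> at tau = -X/2. *)
Lemma Im_cross_sq_le (u v : H) : D u -> D v -> Im (hinner (A v) v) <= 1 ->
  (Im (hinner (A u) v) + Im (hinner (A v) u)) ^ 2 <= 4 * Im (hinner (A u) u).
Proof.
  intros Du Dv Iv.
  set (X := Im (hinner (A u) v) + Im (hinner (A v) u)).
  destruct (A_comb u v (- X / 2) Du Dv) as [Dw Aw].
  pose proof (Im_hinner_A_ge0 _ Dw) as P.
  rewrite Aw, Im_hinner_comb in P. fold X in P.
  pose proof (Im_hinner_A_ge0 v Dv). nra.
Qed.

Lemma Un_cv_0_of_K_tends_infty (a c : nat -> R) (C : R) :
  K_tends_infty D A a ->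
  (exists N0, forall n, (N0 <= n)%nat ->
     exists r, Kset D A (a n) r /\ c n ^ 2 * r <= C) ->
  Un_cv c 0.
Proof.
  intros HK [N0 HN0] e He.
  destruct (HK ((Rabs C + 1) / (e * e))) as [N HN].
  exists (max N N0). intros n Hn.
  destruct (HN0 n ltac:(lia)) as [r [Hr Hc]].
  pose proof (HN n ltac:(lia) r Hr) as Hge.
  unfold R_dist. rewrite Rminus_0_r.
  assert (Hee : 0 < e * e) by nra.
  assert (Hc2 : c n ^ 2 * (Rabs C + 1) <= C * (e * e)).
  { assert (c n ^ 2 * ((Rabs C + 1) / (e * e)) <= C).
    { eapply Rle_trans; [|exact Hc].
      apply Rmult_le_compat_l; [apply pow2_ge_0 | exact Hge]. }
    replace (c n ^ 2 * (Rabs C + 1))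
      with (c n ^ 2 * ((Rabs C + 1) / (e * e)) * (e * e)) by (field; lra).
    nra. }
  assert (Hsq : Rabs (c n) * Rabs (c n) < e * e).
  { pose proof (Rsqr_abs (c n)) as Sq. unfold Rsqr in Sq. rewrite <- Sq.
    pose proof (Rle_abs C). pose proof (Rabs_pos C). nra. }
  pose proof (Rabs_pos (c n)). nra.
Qed.

Section TestVector.
Variables (alpha : Cplx) (e : R) (u v ws : H).
Hypotheses (hRe : 0 < Re alpha <= 1) (hIm : 0 <= Im alpha <= 1) (he : 0 < e < 1).
Hypotheses (huD : D u) (hun : hnorm u = 1)
  (huA : hinner (A u) u = Cmul (RtoC e) alpha).
Hypotheses (hvD : D v) (hvn : hnorm v <= 1) (hAv : hnorm (A v) <= 1)
  (hws : adjoint_rel D A v ws) (hwsn : hnorm ws <= 1)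
  (hReAv : Rabs (Re (hinner (A v) v)) <= Re alpha / 2).

Let c := Re (hinner (A v) u) + Re (hinner (A u) v).
Let s := sqrt e.
Let t := if Rle_dec 0 c then s else - s.
Let w := hadd u (hscal (RtoC t) v).

Lemma sqrt_e_bounds : s * s = e /\ 0 < s < 1 /\ e <= s.
Proof.
  assert (Hss : s * s = e) by (apply sqrt_sqrt; lra).
  assert (Hs0 : 0 < s) by (apply sqrt_lt_R0; lra).
  repeat split; nra.
Qed.

Lemma Rabs_c_le2 : Rabs c <= 2.
Proof.
  (* <Au, v> = <u, A* v> *)
  pose proof (Rabs_Re_hinner_le (A v) u) as B1.
  pose proof (Rabs_Re_hinner_le u ws) as B2. rewrite <- (hws u huD) in B2.
  rewrite (hnorm_sq_eq1 u hun) in B1, B2.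
  pose proof (hnorm_sq_le1 _ hAv). pose proof (hnorm_sq_le1 _ hwsn).
  unfold c. eapply Rle_trans; [apply Rabs_triang|]. lra.
Qed.

Lemma t_choice : t * t = e /\ t * c = s * Rabs c /\ (t = s \/ t = - s).
Proof.
  destruct sqrt_e_bounds as [Hss _]. unfold t.
  destruct (Rle_dec 0 c).
  - rewrite Rabs_right by lra. repeat split; auto.
  - rewrite Rabs_left by lra. repeat split; auto; lra.
Qed.

Lemma w_in_D : D w /\ A w = hadd (A u) (hscal (RtoC t) (A v)).
Proof. apply A_comb; assumption. Qed.

Lemma Re_Au_u : Re (hinner (A u) u) = e * Re alpha.
Proof. rewrite huA. simpl. ring. Qed.

Lemma Im_Au_u : Im (hinner (A u) u) = e * Im alpha.
Proof. rewrite huA. simpl. ring. Qed.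

Lemma Re_Aw_bounds :
  e * Re alpha / 2 + s * Rabs c <= Re (hinner (A w) w) <= 4 * s.
Proof.
  destruct sqrt_e_bounds as [Hss [Hs He]].
  destruct t_choice as [Htt [Htc _]].
  pose proof Rabs_c_le2. apply Rabs_le_inv in hReAv.
  destruct w_in_D as [_ Aw]. rewrite Aw. unfold w.
  rewrite Re_hinner_comb, Re_Au_u.
  replace (Re (hinner (A u) v) + Re (hinner (A v) u)) with c
    by (unfold c; ring).
  rewrite Htc, Htt. nra.
Qed.

Lemma Im_Aw_bounds : 0 <= Im (hinner (A w) w) <= 5 * e.
Proof.
  destruct sqrt_e_bounds as [Hss [Hs He]].
  destruct t_choice as [Htt _].
  destruct w_in_D as [Dw Aw].
  split; [apply Im_hinner_A_ge0, Dw|].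
  assert (Iv : Im (hinner (A v) v) <= 1).
  { pose proof (Rabs_Im_hinner_le (A v) v) as B. apply Rabs_le_inv in B.
    pose proof (hnorm_sq_le1 _ hAv). pose proof (hnorm_sq_le1 _ hvn). lra. }
  pose proof (Im_cross_sq_le u v huD hvD Iv) as X2. rewrite Im_Au_u in X2.
  rewrite Aw. unfold w. rewrite Im_hinner_comb, Im_Au_u, Htt.
  set (X := Im (hinner (A u) v) + Im (hinner (A v) u)) in *.
  (* t X <= (t^2 + X^2) / 2 *)
  pose proof (pow2_ge_0 (t - X)). nra.
Qed.

Lemma norm_w_bounds : 1 - 2 * s <= Re (hinner w w) <= 4.
Proof.
  destruct sqrt_e_bounds as [Hss [Hs He]].
  destruct t_choice as [Htt [_ Ht]].
  pose proof (Rabs_Re_hinner_le u v) as P.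
  pose proof (hnorm_sq_le1 _ hvn). pose proof (hinner_pos _ v).
  rewrite (hnorm_sq_eq1 u hun) in P.
  assert (Htp : Rabs (t * Re (hinner u v)) <= s).
  { assert (Hts : Rabs t = s) by (destruct Ht as [-> | ->];
      [|rewrite Rabs_Ropp]; apply Rabs_right; lra).
    rewrite Rabs_mult, Hts.
    apply Rle_trans with (s * 1); [apply Rmult_le_compat_l|]; lra. }
  apply Rabs_le_inv in Htp.
  unfold w. rewrite Re_hinner_comb, (hnorm_sq_eq1 u hun), (Re_hinner_sym u v), Htt.
  split; nra.
Qed.

Lemma exists_Kset_witness : e < 1 / 16 ->
  exists r, Kset D A (20 * sqrt e) r /\
    (Re (hinner (A v) u) + Re (hinner (A u) v)) ^ 2 * r <= 20.
Proof.
  intro Hsmall. fold c s.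
  destruct sqrt_e_bounds as [Hss [Hs He]].
  assert (Hs4 : s < 1 / 4) by nra.
  destruct Re_Aw_bounds as [ReWl ReWu].
  destruct Im_Aw_bounds as [ImWl ImWu].
  destruct norm_w_bounds as [NWl NWu].
  destruct w_in_D as [Dw _].
  destruct (exists_normalized w Dw ltac:(lra)) as [g [Dg [Ng [Eg Fg]]]].
  set (NW := Re (hinner w w)) in *.
  set (ReW := Re (hinner (A w) w)) in *.
  set (ImW := Im (hinner (A w) w)) in *.
  set (z := hinner (A g) g) in *.
  pose proof (Rabs_pos c) as Hc0.
  assert (ReWpos : 0 < ReW) by nra.
  assert (ERe : Re z = ReW / NW) by (rewrite <- Eg; field; lra).
  assert (EIm : Im z = ImW / NW) by (rewrite <- Fg; field; lra).
  assert (Rg : 0 < Re z) by (rewrite ERe; apply Rdiv_lt_0_compat; lra).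
  assert (Ig : 0 <= Im z) by (rewrite EIm; apply Rmult_le_pos;
    [lra | left; apply Rinv_0_lt_compat; lra]).
  assert (Hz : Re z + Im z <= 18 * s).
  { rewrite ERe, EIm. apply (Rmult_le_reg_r NW); [lra|].
    replace ((ReW / NW + ImW / NW) * NW) with (ReW + ImW) by (field; lra).
    nra. }
  pose proof (Cabs_ge_Re z) as Cl. pose proof (Cabs_le_Re_Im z) as Cu.
  rewrite Rabs_right in Cl by lra.
  rewrite Rabs_right, (Rabs_right (Im z)) in Cu by lra.
  exists (Im z / Re z ^ 2). split.
  - exists g. fold z s. repeat split; [exact Dg | exact Ng | lra | lra | exact Rg].
  - rewrite ERe, EIm.
    apply (sq_mul_normalized_ratio_le c e ReW ImW NW 20); try lra.
    + pose proof (Rsqr_abs c) as Sq. unfold Rsqr in Sq.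
      replace (c ^ 2 * e) with ((s * Rabs c) * (s * Rabs c))
        by (rewrite <- Hss; simpl; nra).
      assert (Hsc : 0 <= s * Rabs c) by (apply Rmult_le_pos; lra).
      assert (s * Rabs c <= ReW)
        by (pose proof (Rmult_lt_0_compat _ _ (proj1 he) (proj1 hRe)); lra).
      simpl. rewrite Rmult_1_r. apply Rmult_le_compat; lra.
    + nra.
Qed.

End TestVector.
End NumericalRange.

Theorem mainTheorem10 (H : Hilbert) (D : H -> Prop) (A : H -> H)
  (hlin : is_linear_operator D A)
  (hdense : densely_defined D)
  (hclosed : closed_operator D A)
  (hdom : forall v, D v -> adjoint_dom D A v)
  (hnum : num_range_upper D A)
  (hK : forall a : nat -> R, (forall n, 0 < a n) -> Un_cv a 0 -> K_tends_infty D A a)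
  (alpha : Cplx)
  (hRe : 0 < Re alpha < 1) (hIm : 0 < Im alpha < 1) (habs : Cabs alpha < 1)
  (eps : nat -> R) (heps : forall n, 0 < eps n < 1) (heps0 : Un_cv eps 0)
  (u : nat -> H) (huD : forall n, D (u n)) (hun : forall n, hnorm (u n) = 1)
  (huA : forall n, hinner (A (u n)) (u n) = Cmul (RtoC (eps n)) alpha)
  (v : nat -> H) (hvD : forall n, D (v n))
  (hvn : forall n, hnorm (v n) <= 1)
  (hAv : forall n, hnorm (A (v n)) <= 1)
  (hAsv : forall n w, adjoint_rel D A (v n) w -> hnorm w <= 1)
  (hReAv : forall n, Rabs (Re (hinner (A (v n)) (v n))) <= Re alpha / 2) :
  Un_cv (fun n => Re (Cadd (hinner (A (v n)) (u n)) (hinner (A (u n)) (v n)))) 0.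
Proof.
  apply (Un_cv_0_of_K_tends_infty D A (fun n => 20 * sqrt (eps n)) _ 20).
  - apply hK; [|exact (Un_cv_scal_sqrt 20 eps heps0)].
    intro n. pose proof (sqrt_lt_R0 _ (proj1 (heps n))). lra.
  - destruct (heps0 (1 / 16)) as [N HN]; [lra|].
    exists N. intros n Hn.
    assert (Hsmall : eps n < 1 / 16).
    { specialize (HN n Hn). unfold R_dist in HN. rewrite Rminus_0_r in HN.
      apply Rabs_def2 in HN. lra. }
    destruct (hdom _ (hvD n)) as [ws Hws].
    apply (exists_Kset_witness D A hlin hnum alpha (eps n) (u n) (v n) ws);
      eauto; lra.
Qed.
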